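(* Let $F:\mathcal{P}(V,A)\to 2^A\setminus\{\emptyset\}$ be a committee selection rule satisfying SPO and SPP. Let $P$ be a profile, $i$ a voter, $W=F(P)$, $s=\mathrm{best}(P_i,W)$, $b=\mathrm{worst}(P_i,W)$, and let $W'=F(P^{i\uparrow s})$. Then (1) $\mathrm{best}(P_i^{\uparrow s},W')=s$, and (2) $\mathrm{worst}(P_i^{\uparrow s},W')=b$.
   Context: $V$ is a finite nonempty set of voters, $A$ a finite set of alternatives; a profile $P$ assigns to each voter $i$ a linear order $P_i$ on $A$ (strict part $\succ_i$, weak part $\succeq_i$); $P_i'P_{-i}$ replaces voter $i$'s order by $P_i'$. A committee selection rule maps each profile to a nonempty subset of $A$. $\mathrm{best}(P_i,W)$, $\mathrm{worst}(P_i,W)$ are the $P_i$-best and $P_i$-worst elements of nonempty $W\subseteq A$. SPO: for all $P$, $i$, $P_i'$, $\mathrm{best}(P_i,F(P))\succeq_i\mathrm{best}(P_i,F(P_i'P_{-i}))$; SPP: same with $\mathrm{worst}$. $P_i^{\uparrow s}$ is the linear order obtained from $P_i$ by swapping $s$ with the alternative directly above it (no change if $s$ is already ranked first), and $P^{i\uparrow s}$ is the profile obtained from $P$ by replacing $P_i$ with $P_i^{\uparrow s}$. *)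

From mathcomp Require Import all_boot.
Set Implicit Arguments. Unset Strict Implicit. Unset Printing Implicit Defensive.

(* A linear order on a finite set A of alternatives, represented as the list of
   all alternatives from best (head) to worst, each occurring exactly once. *)
Record lorder (A : finType) := LOrder {
  lseq : seq A;
  lseqP : perm_eq lseq (enum A) }.

Definition lstrict (A : finType) (Pi : lorder A) (x y : A) : bool :=
  index x (lseq Pi) < index y (lseq Pi).
Definition lweak (A : finType) (Pi : lorder A) (x y : A) : bool :=
  index x (lseq Pi) <= index y (lseq Pi).

Definition profile (V A : finType) := V -> lorder A.
Definition csr (V A : finType) := profile V A -> {set A}.
Definition nonempty_valued (V A : finType) (F : csr V A) : Prop :=
  forall P, F P != set0.

Definition upd (V A : finType) (P : profile V A) (i : V) (Pi' : lorder A)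
  : profile V A := fun j => if j == i then Pi' else P j.

Definition is_best (A : finType) (Pi : lorder A) (W : {set A}) (x : A) : Prop :=
  x \in W /\ forall y, y \in W -> lweak Pi x y.
Definition is_worst (A : finType) (Pi : lorder A) (W : {set A}) (x : A) : Prop :=
  x \in W /\ forall y, y \in W -> lweak Pi y x.

Definition SPO (V A : finType) (F : csr V A) : Prop :=
  forall P i Pi' x y, is_best (P i) (F P) x ->
    is_best (P i) (F (upd P i Pi')) y -> lweak (P i) x y.
Definition SPP (V A : finType) (F : csr V A) : Prop :=
  forall P i Pi' x y, is_worst (P i) (F P) x ->
    is_worst (P i) (F (upd P i Pi')) y -> lweak (P i) x y.

(* swap s with the element directly above it (no change if s is first) *)
Fixpoint swap_up (A : eqType) (s : A) (l : seq A) : seq A :=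
  match l with
  | x :: ((y :: l'') as l') => if y == s then y :: x :: l'' else x :: swap_up s l'
  | _ => l
  end.

Lemma swap_up_perm (A : eqType) (s : A) (l : seq A) : perm_eq (swap_up s l) l.
Proof.
elim: l => [//|x [|y l] IH] //=.
case: ifP => _; last by rewrite perm_cons.
by apply/permP => p /=; rewrite !addnA [(p y + _)%N]addnC.
Qed.

Definition lup (A : finType) (Pi : lorder A) (s : A) : lorder A :=
  @LOrder A (swap_up s (lseq Pi)) (perm_trans (swap_up_perm s (lseq Pi)) (lseqP Pi)).

Definition prof_up (V A : finType) (P : profile V A) (i : V) (s : A) : profile V A :=
  upd P i (lup (P i) s).

From mathcomp Require Import all_boot.
From Stdlib Require Import FunctionalExtensionality.
Set Implicit Arguments. Unset Strict Implicit. Unset Printing Implicit Defensive.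

(* Raising [s] only reverses the order of [s] and its predecessor, so every
   comparison not of the form "[x] above [s]" survives, in both directions,
   between [P_i] and [P_i^{up s}].  Strategy-proofness is applied twice: to
   voter [i] with true order [P_i] misreporting [P_i^{up s}], and to voter [i]
   with true order [P_i^{up s}] misreporting [P_i].  The first bounds the best
   (worst) element of [W'] by [s] ([b]) in [P_i], the second bounds [s] ([b])
   by the best (worst) element of [W'] in [P_i^{up s}], and transferring the
   comparisons forces equality. *)

Lemma index_swap_up_lt (T : eqType) (s x y : T) (l : seq T) :
  index x l < index y l -> y != s -> index x (swap_up s l) < index y (swap_up s l).
Proof.
elim: l => [//|a l IH]; case: l IH => [//|c l] IH.
have -> : swap_up s [:: a, c & l] =
  if c == s then [:: c, a & l] else a :: swap_up s (c :: l) by [].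
move=> lt_xy yNs; case: eqP => [cs | _].
  move: lt_xy; rewrite cs /= [s == y]eq_sym (negbTE yNs).
  by case: (a == y); case: (s == x); case: (a == x).
move: lt_xy IH; move: (c :: l) (swap_up s (c :: l)) => t t' /=.
by case: (a == x); case: (a == y) => // lt_xy IH; apply: IH.
Qed.

Section LinearOrders.
Variable A : finType.
Implicit Types (Pi : lorder A) (W : {set A}) (s x y : A).

Lemma lweakNlstrict Pi x y : lweak Pi x y = ~~ lstrict Pi y x.
Proof. exact: leqNgt. Qed.

Lemma lweak_trans Pi y x z : lweak Pi x y -> lweak Pi y z -> lweak Pi x z.
Proof. exact: leq_trans. Qed.

Lemma lweak_antisym Pi x y : lweak Pi x y -> lweak Pi y x -> x = y.
Proof.
have memPi z : z \in lseq Pi by rewrite (perm_mem (lseqP Pi)) mem_enum.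
move=> le_xy le_yx; apply: (index_inj x (memPi x) (memPi y)).
by apply/eqP; rewrite eqn_leq; apply/andP.
Qed.

Lemma lweak_eq_or_lstrict Pi x y : lweak Pi x y -> x = y \/ lstrict Pi x y.
Proof.
rewrite /lweak leq_eqVlt => /orP[/eqP eq_idx | lt_xy]; last by right.
by left; apply: (@lweak_antisym Pi); rewrite /lweak eq_idx.
Qed.

Lemma best_exists Pi W : W != set0 -> exists x, is_best Pi W x.
Proof.
case/set0Pn => x0 /(arg_minnP (fun x => index x (lseq Pi)))[x xW x_min].
by exists x.
Qed.

Lemma worst_exists Pi W : W != set0 -> exists x, is_worst Pi W x.
Proof.
case/set0Pn => x0 /(arg_maxnP (fun x => index x (lseq Pi)))[x xW x_max].
by exists x.
Qed.

Lemma lstrict_lup Pi s x y : lstrict Pi x y -> y != s -> lstrict (lup Pi s) x y.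
Proof. exact: index_swap_up_lt. Qed.

Lemma lweak_lup Pi s x y :
  lweak Pi x y -> (y != s) || (x == s) -> lweak (lup Pi s) x y.
Proof.
case/lweak_eq_or_lstrict => [-> _ | lt_xy]; first exact: leqnn.
case: (eqVneq y s) => [ys | yNs] /= xs; last exact/ltnW/lstrict_lup.
by move: lt_xy; rewrite ys (eqP xs) /lstrict ltnn.
Qed.

Lemma lweak_unlup Pi s x y : lweak (lup Pi s) x y -> x != s -> lweak Pi x y.
Proof. by rewrite !lweakNlstrict => + xNs; apply: contra => /lstrict_lup; apply. Qed.

End LinearOrders.

Section Profiles.
Variables V A : finType.
Implicit Types (P : profile V A) (Q R : lorder A).

Lemma updE P i Q : upd P i Q i = Q.
Proof. by rewrite /upd eqxx. Qed.

Lemma upd_upd P i Q R : upd (upd P i Q) i R = upd P i R.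
Proof. by apply: functional_extensionality => j; rewrite /upd; case: eqP. Qed.

Lemma upd_id P i : upd P i (P i) = P.
Proof. by apply: functional_extensionality => j; rewrite /upd; case: eqP => [->|]. Qed.

Variable F : csr V A.

(* The same manipulation read backwards: a voter whose true order is [Q]
   cannot gain by returning from [upd P i Q] to the original report [P i]. *)
Lemma SPO_upd P i Q x y : SPO F ->
  is_best Q (F (upd P i Q)) x -> is_best Q (F P) y -> lweak Q x y.
Proof.
by move=> spo; have := spo (upd P i Q) i (P i) x y; rewrite updE upd_upd upd_id.
Qed.

Lemma SPP_upd P i Q x y : SPP F ->
  is_worst Q (F (upd P i Q)) x -> is_worst Q (F P) y -> lweak Q x y.
Proof.
by move=> spp; have := spp (upd P i Q) i (P i) x y; rewrite updE upd_upd upd_id.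
Qed.

Hypothesis F_neq0 : nonempty_valued F.
Variables (P : profile V A) (i : V) (s : A).
Hypothesis s_best : is_best (P i) (F P) s.

Lemma best_prof_up : SPO F -> is_best (lup (P i) s) (F (prof_up P i s)) s.
Proof.
move: s_best => [sW s_min] spo.
have s_best_up : is_best (lup (P i) s) (F P) s.
  by split=> // y yW; apply: lweak_lup (s_min y yW) _; rewrite eqxx orbT.
have [x x_best_up] := best_exists (lup (P i) s) (F_neq0 (prof_up P i s)).
have [y y_best] := best_exists (P i) (F_neq0 (prof_up P i s)).
have le_xs_up : lweak (lup (P i) s) x s := SPO_upd spo x_best_up s_best_up.
have le_sy : lweak (P i) s y := spo P i (lup (P i) s) s y s_best y_best.
suff xs : x = s by move: x_best_up; rewrite xs.
case: (eqVneq x s) => // xNs.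
apply: lweak_antisym (lweak_unlup le_xs_up xNs) _.
exact: lweak_trans le_sy (y_best.2 x x_best_up.1).
Qed.

Lemma worst_prof_up b : SPP F ->
  is_worst (P i) (F P) b -> is_worst (lup (P i) s) (F (prof_up P i s)) b.
Proof.
move: s_best => [_ s_min] spp b_worst; move: (b_worst) => [bW b_max].
have b_worst_up : is_worst (lup (P i) s) (F P) b.
  split=> // y yW; apply: lweak_lup (b_max y yW) _.
  case: (eqVneq b s) => [bs | //].
  have sy : lweak (P i) b y by rewrite bs; exact: s_min.
  by rewrite (lweak_antisym (b_max y yW) sy) bs eqxx orbT.
have [u u_worst_up] := worst_exists (lup (P i) s) (F_neq0 (prof_up P i s)).
have [z z_worst] := worst_exists (P i) (F_neq0 (prof_up P i s)).
have le_ub_up : lweak (lup (P i) s) u b := SPP_upd spp u_worst_up b_worst_up.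
have le_bz : lweak (P i) b z := spp P i (lup (P i) s) b z b_worst z_worst.
have le_zb_up := lweak_trans (u_worst_up.2 z z_worst.1) le_ub_up.
have le_zb : lweak (P i) z b.
  case: (eqVneq z s) => [-> | zNs]; first exact: s_min.
  exact: lweak_unlup le_zb_up zNs.
have zb : z = b := lweak_antisym le_zb le_bz.
suff ub : u = b by move: u_worst_up; rewrite ub.
by apply: lweak_antisym le_ub_up _; rewrite -zb; apply: u_worst_up.2; case: z_worst.
Qed.

End Profiles.

Theorem lemma8 (V A : finType) (F : csr V A)
  (HF : nonempty_valued F) (Hspo : SPO F) (Hspp : SPP F)
  (P : profile V A) (i : V) (s b : A) :
  is_best (P i) (F P) s -> is_worst (P i) (F P) b ->
  is_best (lup (P i) s) (F (prof_up P i s)) s /\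
  is_worst (lup (P i) s) (F (prof_up P i s)) b.
Proof.
move=> s_best b_worst.
by split; [exact: best_prof_up | exact: worst_prof_up].
Qed.
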